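(* Let $\mathbf{k}$ be a commutative ring, $n\ge0$, $\mathcal{A}=\mathbf{k}[S_n]$. Fix $\alpha,\beta\in\operatorname{Comp}_n$ and let $\eta_\beta(\alpha)$ be the number of functions $f:[\ell(\beta)]\to[\ell(\alpha)]$ such that for every $j\in[\ell(\alpha)]$ one has $\alpha_j=\sum_{i\in f^{-1}(j)}\beta_i$. Let $Q_\beta:=\sum_{\alpha'\in\operatorname{Comp}_n,\ \alpha'\prec\beta}\mathcal{R}_{\alpha'}$. Then left multiplication by $\mathbf{B}_\alpha$ acts on the quotient $\mathcal{R}_\beta/Q_\beta$ as multiplication by the scalar $\eta_\beta(\alpha)$.
   Context: $S_n$ is the symmetric group on $[n]=\{1,\dots,n\}$, with product $(uw)(i)=u(w(i))$. For $w\in S_n$, $\operatorname{Des}(w)=\{i\in[n-1]: w(i)>w(i+1)\}$. For $I\subseteq[n-1]$, $\mathbf{B}_I=\sum_{w\in S_n,\ \operatorname{Des}(w)\subseteq I} w\in\mathcal{A}$. A composition $\alpha=(\alpha_1,\dots,\alpha_p)$ of $n$ is a finite sequence of positive integers with sum $n$; its length is $\ell(\alpha)=p$; $\operatorname{Comp}_n$ is the set of these. $\operatorname{Set}(\alpha)=\{\alpha_1,\alpha_1+\alpha_2,\dots,\alpha_1+\cdots+\alpha_{p-1}\}$ and $\mathbf{B}_\alpha:=\mathbf{B}_{\operatorname{Set}(\alpha)}$. For compositions $\alpha=(\alpha_1,\dots,\alpha_m)$, $\beta=(\beta_1,\dots,\beta_p)$ of $n$, $\alpha\preceq\beta$ means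 $\alpha$ can be split into $p$ contiguous subsequences whose $j$-th one sums to $\beta_j$; $\alpha\prec\beta$ means $\alpha\preceq\beta$ and $\alpha\ne\beta$. $\mathcal{R}_\beta:=\mathbf{B}_\beta\mathcal{A}$. *)

From HB Require Import structures.
From mathcomp Require Import all_boot all_order fingroup perm all_algebra.
Set Implicit Arguments. Unset Strict Implicit. Unset Printing Implicit Defensive.
Import GRing.Theory.
Local Open Scope ring_scope.

(* The group algebra k[S_n]: finitely supported functions S_n -> k,
   i.e. elements  \sum_w f(w) w. *)
Definition alg (k : comPzRingType) (n : nat) := {ffun 'S_n -> k}.

(* Paper convention: (u w)(i) = u (w i).  In MathComp, (s * t)%g x = t (s x),
   so the paper's product u w is the MathComp permutation (w * u)%g. *)
Definition pmul n (u w : 'S_n) : 'S_n := (w * u)%g.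

Definition gaZero (k : comPzRingType) n : alg k n := [ffun _ => 0].
Definition gaAdd (k : comPzRingType) n (f g : alg k n) : alg k n :=
  [ffun x => f x + g x].
Definition gaSub (k : comPzRingType) n (f g : alg k n) : alg k n :=
  [ffun x => f x - g x].
Definition gaScale (k : comPzRingType) n (c : k) (f : alg k n) : alg k n :=
  [ffun x => c * f x].
Definition gaMul (k : comPzRingType) n (f g : alg k n) : alg k n :=
  [ffun x => \sum_(u : 'S_n) \sum_(w : 'S_n)
                if pmul u w == x then f u * g w else 0].

(* Des(w) = { i in [n-1] : w(i) > w(i+1) }, positions 1-indexed;
   a 0-indexed ordinal j : 'I_n stores position j+1's value at w j. *)
Definition desb n (w : 'S_n) (i : nat) : bool :=
  [exists j : 'I_n, exists j' : 'I_n,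
     [&& val j == i.-1, val j' == i, 0 < i & val (w j') < val (w j)]%N].

Definition is_comp (n : nat) (a : seq nat) : bool :=
  all (fun x => 0 < x)%N a && (sumn a == n).

Definition compSet (a : seq nat) : seq nat :=
  [seq sumn (take m a) | m <- iota 1 (size a).-1].

Definition Bset (k : comPzRingType) n (s : seq nat) : alg k n :=
  [ffun w => if [forall j : 'I_n, desb w j ==> (val j \in s)] then 1 else 0].

Definition Bcomp (k : comPzRingType) n (a : seq nat) : alg k n :=
  Bset k n (compSet a).

Definition refines (a b : seq nat) : Prop :=
  exists ss : seq (seq nat),
    [/\ flatten ss = a, size ss = size b & map sumn ss = b].

Definition srefines (a b : seq nat) : Prop := refines a b /\ a <> b.

Definition eta (a b : seq nat) : nat :=
  #|[set f : {ffun 'I_(size b) -> 'I_(size a)} |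
      [forall j : 'I_(size a),
         nth 0%N a j == (\sum_(i : 'I_(size b) | f i == j) nth 0%N b i)%N]]|.

(* Q_beta = sum over compositions alpha' < beta of the right ideals
   R_alpha' = B_alpha' A; membership = being a finite sum of elements
   B_alpha' * x with alpha' a composition of n strictly refining beta. *)
Definition inQ (k : comPzRingType) n (b : seq nat) (x : alg k n) : Prop :=
  exists s : seq (seq nat * alg k n),
    (forall p, p \in s -> is_comp n p.1 /\ srefines p.1 b) /\
    x = foldr (fun p acc => gaAdd (gaMul (Bcomp k n p.1) p.2) acc) (gaZero k n) s.

(* Write v = u w, with Des u in Set(alpha) and Des w in Set(beta): the
   coefficient of v in B_alpha B_beta counts these w.  Label each position p
   by the block of alpha containing w(p).  The labeling determines w (sort the
   positions by label, breaking ties by v), and a labeling realized by some w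
   with Des w in Set(beta) comes from a factorization of v exactly when
   Des v lies in Set(beta) together with the positions where the label
   changes.  So B_alpha B_beta is the sum over realizable labelings of B_D for
   these descent sets D.  Labelings constant on the blocks of beta are induced
   by the eta_beta(alpha) maps f and give D = Set(beta); each other labeling
   gives D = Set(gamma) for a composition gamma strictly refining beta. *)

From mathcomp Require Import all_boot all_order fingroup perm all_algebra.
From mathcomp Require Import zify.
Set Implicit Arguments. Unset Strict Implicit. Unset Printing Implicit Defensive.
Open Scope nat_scope.

Section NatSums.
Implicit Types (F G : nat -> nat) (n : nat).

Lemma leq_sum_nat F G n :
  (forall i, i < n -> F i <= G i) ->
  \sum_(0 <= i < n) F i <= \sum_(0 <= i < n) G i.
Proof.
move=> FG; rewrite big_nat_cond [X in _ <= X]big_nat_cond.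
by apply: leq_sum => i /andP[/andP[_ ?] _]; apply: FG.
Qed.

Lemma ltn_sum_nat F G n p : p < n ->
  (forall i, i < n -> F i <= G i) -> F p < G p ->
  \sum_(0 <= i < n) F i < \sum_(0 <= i < n) G i.
Proof.
move=> ltpn FG ltFGp.
rewrite !(big_cat_nat (leq0n p) (ltnW ltpn)) !(big_cat_nat (leqnSn p) ltpn) /=.
have FG_lo : \sum_(0 <= i < p) F i <= \sum_(0 <= i < p) G i.
  by apply: leq_sum_nat => i ltip; apply: FG; apply: ltn_trans ltpn.
have FG_hi : \sum_(p.+1 <= i < n) F i <= \sum_(p.+1 <= i < n) G i.
  rewrite big_nat_cond [X in _ <= X]big_nat_cond.
  by apply: leq_sum => i /andP[/andP[_ ?] _]; apply: FG.
rewrite !big_nat1; lia.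
Qed.

Lemma sum_nat_eq_ltn x K : \sum_(0 <= j < K) (x == j) = (x < K).
Proof.
elim: K => [|K IH]; first by rewrite big_geq.
by rewrite big_nat_recr //= IH ltnS; case: (ltngtP x K).
Qed.

Lemma sum_nat_ltn m n : m <= n -> \sum_(0 <= x < n) (x < m) = m.
Proof.
move=> lemn; rewrite (big_cat_nat (leq0n m) lemn) /=.
rewrite (eq_big_nat _ _ (F2 := fun _ => 1)); last by move=> i /andP[_ ->].
rewrite (eq_big_nat _ _ (F1 := fun i => (i < m) : nat) (F2 := fun _ => 0)); last first.
  by move=> i /andP[lemi _]; rewrite ltnNge lemi.
by rewrite !sum_nat_const_nat; lia.
Qed.

Lemma ltn_sum_nat_homo (g : nat -> nat) n J x :
  {homo g : x y / x <= y} -> x < n ->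
  (x < \sum_(0 <= y < n) (g y < J)) = (g x < J).
Proof.
move=> g_homo ltxn; case: (ltnP (g x) J) => gxJ.
  rewrite (big_cat_nat (leq0n x.+1) ltxn) /=; apply: leq_trans (leq_addr _ _).
  rewrite -[X in X <= _](sum_nat_ltn (leqnn x.+1)).
  apply: leq_sum_nat => i _; case: ltnP => //= ltix.
  by rewrite lt0b (leq_ltn_trans (g_homo i x ltix)).
apply/negbTE; rewrite -leqNgt (big_cat_nat (leq0n x) (ltnW ltxn)) /=.
rewrite [X in _ + X](eq_big_nat _ _ (F2 := fun _ => 0)); last first.
  by move=> i /andP[lexi _]; apply/eqP; rewrite eqb0 -leqNgt (leq_trans gxJ (g_homo _ _ lexi)).
rewrite sum_nat_const_nat muln0 addn0 -[X in _ <= X](sum_nat_ltn (leqnn x)).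
by apply: leq_sum_nat => i ltix; rewrite ltix leq_b1.
Qed.

Lemma sum_nat_gt0_exists n (P : pred nat) :
  0 < \sum_(0 <= x < n) P x -> exists2 x, x < n & P x.
Proof.
elim: n => [|n IH]; first by rewrite big_geq.
rewrite big_nat_recr //=; case Pn: (P n); first by exists n.
by rewrite addn0 => /IH[x ltxn Px]; exists x => //; apply: ltnW.
Qed.

Lemma sum_nat_ltn_fibers F G n J :
  (forall j, \sum_(0 <= q < n) (F q == j) = \sum_(0 <= x < n) (G x == j)) ->
  \sum_(0 <= q < n) (F q < J) = \sum_(0 <= x < n) (G x < J).
Proof.
move=> FG.
transitivity (\sum_(0 <= q < n) \sum_(0 <= j < J) (F q == j)).
  by apply: eq_big_nat => q _; rewrite sum_nat_eq_ltn.
rewrite exchange_big_nat /=.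
under eq_big_nat => j _ do rewrite FG.
rewrite exchange_big_nat /=.
by apply: eq_big_nat => x _; rewrite sum_nat_eq_ltn.
Qed.

End NatSums.

(* [blk s x] is the index of the block containing the 0-based position [x]
   of the composition whose set of partial sums is [s]. *)
Definition blk (s : seq nat) (x : nat) : nat := count (fun y => y <= x) s.

Lemma leq_blk s : {homo blk s : x y / x <= y}.
Proof. by move=> x y lexy; apply: sub_count => z /= lezx; apply: leq_trans lezx lexy. Qed.

Lemma blk_size s x : blk s x <= size s.
Proof. exact: count_size. Qed.

Lemma blk_pred_eq s x : 0 < x -> (blk s x.-1 == blk s x) = (x \notin s).
Proof.
move=> x_gt0; have blkE : blk s x = blk s x.-1 + count_mem x s.
  rewrite /blk -count_predUI [X in _ = _ + X](eq_count (a2 := pred0)) ?count_pred0.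
    by rewrite addn0; apply: eq_count => y /=; lia.
  by move=> y /=; lia.
by rewrite blkE -[X in X == _]addn0 eqn_add2l eq_sym -has_pred1 has_count lt0n negbK.
Qed.

Lemma size_compSet c : size (compSet c) = (size c).-1.
Proof. by rewrite size_map size_iota. Qed.

Lemma compSet_cons g c :
  compSet (g :: c) = if c is [::] then [::] else g :: map (addn g) (compSet c).
Proof.
case: c => [|x c] //; rewrite /compSet /= addn0; congr (_ :: _).
by rewrite -map_comp -[2]/(1 + 1) iotaDl -map_comp.
Qed.

Lemma mem_compSet_consD g c y :
  0 < y -> (g + y \in compSet (g :: c)) = (y \in compSet c).
Proof.
move=> y_gt0; rewrite compSet_cons; case: c => [|x c] //.
rewrite in_cons; have -> : (g + y == g) = false by lia.
by rewrite /= (mem_map (@addnI g)).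
Qed.

Lemma compSet_consD g y c :
  compSet ((g + y) :: c) = map (addn g) (compSet (y :: c)).
Proof.
rewrite !compSet_cons; case: c => //= x c; rewrite -map_comp.
by congr (_ :: _); apply: eq_map => i; rewrite /= addnA.
Qed.

Lemma compSet_rcons c y :
  compSet (rcons c y) = [seq sumn (take m c) | m <- iota 1 (size c)].
Proof.
rewrite /compSet size_rcons /=; apply/eq_in_map => m; rewrite mem_iota => /andP[_ ltm].
by rewrite -cats1 takel_cat //; lia.
Qed.

Lemma compSet_rcons1 c : 0 < size c ->
  compSet (rcons c 1) = rcons (compSet c) (sumn c).
Proof.
rewrite compSet_rcons /compSet => size_c_gt0.
have -> : iota 1 (size c) = rcons (iota 1 (size c).-1) (size c).
  by rewrite -{1}(prednK size_c_gt0) -[(size c).-1.+1]addn1 iotaD cats1 add1n prednK.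
by rewrite map_rcons take_size.
Qed.

Lemma sumn_gt0 c : all (fun x => 0 < x) c -> 0 < size c -> 0 < sumn c.
Proof. by case: c => [|x c] //= /andP[x_gt0 _] _; apply: leq_trans x_gt0 (leq_addr _ _). Qed.

Lemma compSet_bounds c x :
  all (fun x => 0 < x) c -> x \in compSet c -> 0 < x < sumn c.
Proof.
move=> c_pos /mapP[m]; rewrite mem_iota => /andP[m_gt0 ltm] ->.
have lt_m_size : m < size c by move: ltm; case: (size c) => [|?] //=; lia.
have -> : sumn c = sumn (take m c) + sumn (drop m c) by rewrite -sumn_cat cat_take_drop.
rewrite -[X in _ && (X < _)]addn0 ltn_add2l.
apply/andP; split; apply: sumn_gt0.
- by apply/allP => y /mem_take; apply: (allP c_pos).
- by rewrite size_take lt_m_size.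
- by apply/allP => y /mem_drop; apply: (allP c_pos).
- by rewrite size_drop subn_gt0.
Qed.

Lemma blk_compSet_cons g c x : c != [::] ->
  blk (compSet (g :: c)) x = if x < g then 0 else (blk (compSet c) (x - g)).+1.
Proof.
rewrite compSet_cons /blk; case: c => [|y c] //= _; rewrite count_map.
case: (ltnP x g) => [ltxg|legx] /=.
  by rewrite add0n (eq_count (a2 := pred0)) ?count_pred0 // => z /=; lia.
by rewrite -add1n; congr (_ + _); apply: eq_count => z /=; lia.
Qed.

Lemma card_blk_fiber n c j : is_comp n c ->
  \sum_(0 <= x < n) (blk (compSet c) x == j) = nth 0 c j.
Proof.
elim: c n j => [|g c IH] n j /andP[/= c_pos /eqP <-{n}]; first by rewrite big_geq ?nth_nil.
have [->|c_nil] := eqVneq c [::].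
  rewrite addn0 (eq_big_nat _ _ (F2 := fun _ => (j == 0 : nat))) ?sum_nat_const_nat;
    last by move=> x _; rewrite /blk /= eq_sym.
  by case: j => [|[|j]] /=; rewrite ?muln1 ?muln0 ?subn0.
move: c_pos => /andP[_ c_pos].
rewrite (big_cat_nat (leq0n g) (leq_addr _ _)) /= -{3}[g]add0n big_addn addKn.
rewrite (eq_big_nat _ _ (F2 := fun _ => (j == 0 : nat))); last first.
  by move=> x /andP[_ ltxg]; rewrite blk_compSet_cons // ltxg eq_sym.
rewrite [X in _ + X](eq_big_nat _ _ (F2 := fun y => ((blk (compSet c) y).+1 == j : nat)));
  last first.
  by move=> y _; rewrite blk_compSet_cons // ltnNge leq_addl /= addnK.
rewrite sum_nat_const_nat subn0; case: j => [|j] /=.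
  by rewrite muln1 big1 ?addn0.
by rewrite muln0 add0n; apply: IH; rewrite /is_comp c_pos /=.
Qed.

Lemma comp0_nil c : is_comp 0 c -> c = [::].
Proof. by case: c => [|x c] // /andP[/andP[x_gt0 _]]; rewrite /= addn_eq0 eqn0Ngt x_gt0. Qed.

Lemma comp_size_gt0 n c : is_comp n c -> 0 < n -> 0 < size c.
Proof. by case: c => // /andP[_ /eqP <-]. Qed.

Lemma comp_nth_gt0 n c i : is_comp n c -> i < size c -> 0 < nth 0 c i.
Proof. by move=> /andP[/allP c_pos _] lt_i_c; apply/c_pos/mem_nth. Qed.

Lemma comp_with_cuts (P : pred nat) n : 0 < n ->
  exists2 c, is_comp n c & forall i, 0 < i -> i < n -> (i \in compSet c) = P i.
Proof.
case: n => [|m] // _; elim: m => [|m [c /andP[c_pos /eqP sum_c] cutsP]].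
  by exists [:: 1] => // i; case: i => [|[|]].
have c_gt0 : 0 < size c by case: c sum_c {c_pos cutsP}.
case Pm: (P m.+1).
  exists (rcons c 1).
    by rewrite /is_comp all_rcons c_pos -cats1 sumn_cat sum_c /= addn1.
  move=> i i_gt0 lt_i_m; rewrite compSet_rcons1 // mem_rcons in_cons sum_c.
  move: lt_i_m; rewrite ltnS leq_eqVlt => /orP[/eqP->|ltim]; first by rewrite eqxx Pm.
  by rewrite (cutsP _ i_gt0 ltim) (ltn_eqF ltim).
case/lastP: c c_pos sum_c cutsP c_gt0 => [|c x] // c_pos sum_c cutsP _.
exists (rcons c x.+1).
  move: c_pos; rewrite /is_comp !all_rcons => /andP[_ ->] /=.
  by rewrite -cats1 sumn_cat -sum_c -cats1 sumn_cat /= !addn0 addnS.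
have -> : compSet (rcons c x.+1) = compSet (rcons c x) by rewrite !compSet_rcons.
move=> i i_gt0; rewrite ltnS leq_eqVlt => /orP[/eqP->|/(cutsP _ i_gt0) //].
by rewrite Pm; apply/negP => /(compSet_bounds c_pos); rewrite sum_c ltnn andbF.
Qed.

Lemma compSet_consD_subset g a c : all (fun x => 0 < x) c ->
  {subset map (addn g) (compSet c) <= compSet (g :: a)} ->
  {subset compSet c <= compSet a}.
Proof.
move=> c_pos sub_c z z_c; have /andP[z_gt0 _] := compSet_bounds c_pos z_c.
by rewrite -(mem_compSet_consD g) //; apply/sub_c/map_f.
Qed.

Lemma refines_of_compSet n a b : is_comp n a -> is_comp n b ->
  {subset compSet b <= compSet a} -> refines a b.
Proof.
elim: a n b => [|g a IH] n b.
  by move=> /andP[_ /eqP /= <-] /comp0_nil -> _; exists [::].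
move=> /andP[/= /andP[g_gt0 a_pos] /eqP sum_ga] /andP[b_pos /eqP sum_b] sub_ba.
have a_comp : is_comp (n - g) a by apply/andP; rewrite -sum_ga addKn.
case: b b_pos sum_b sub_ba => [|b1 [|b2 b]] /= b_pos sum_b sub_ba; first by exfalso; lia.
  by exists [:: g :: a]; split; rewrite /= ?cats0 // sum_ga -sum_b addn0.
move: b_pos => /andP[b1_gt0 b_pos].
have : b1 \in compSet (g :: a) by apply: sub_ba; rewrite compSet_cons /= mem_head.
rewrite compSet_cons.
case: a IH a_pos sum_ga a_comp sub_ba => [|a1 a] // IH a_pos sum_ga a_comp sub_ba.
rewrite in_cons => /orP[/eqP b1g | /mapP[y y_a b1E]].
  have [ss [flat_ss size_ss sum_ss]] : refines (a1 :: a) (b2 :: b).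
    apply: (IH _ _ a_comp); first by apply/andP; split => //=; lia.
    apply: (@compSet_consD_subset g) => // z z_b; apply: sub_ba.
    by rewrite b1g compSet_cons in_cons z_b orbT.
  by exists ([:: g] :: ss); rewrite /= flat_ss size_ss sum_ss b1g addn0.
have [y_gt0 _] := andP (compSet_bounds a_pos y_a).
have [ss [flat_ss size_ss sum_ss]] : refines (a1 :: a) (y :: b2 :: b).
  apply: (IH _ _ a_comp); first by apply/andP; split; rewrite /= ?y_gt0 //; lia.
  apply: (@compSet_consD_subset g _ (y :: b2 :: b)); first by rewrite /= y_gt0.
  by move=> z; rewrite -compSet_consD -b1E; apply: sub_ba.
case: ss flat_ss size_ss sum_ss => [|s0 ss] //= flat_ss [size_ss] [sum_s0 sum_ss].
by exists ((g :: s0) :: ss); rewrite /= flat_ss size_ss sum_s0 sum_ss b1E.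
Qed.

Section PermNat.
Variable n : nat.
Implicit Types u w : 'S_n.

Definition perm_nat w (x : nat) : nat :=
  if insub x is Some i then val (w i) else x.

Lemma perm_natE w (i : 'I_n) : perm_nat w i = w i.
Proof. by rewrite /perm_nat valK. Qed.

Lemma perm_natE_lt w x (ltxn : x < n) : perm_nat w x = w (Ordinal ltxn).
Proof. by rewrite -perm_natE. Qed.

Lemma perm_nat_out w x : n <= x -> perm_nat w x = x.
Proof. by move=> lenx; rewrite /perm_nat insubF // ltnNge lenx. Qed.

Lemma perm_nat_ltn w x : (perm_nat w x < n) = (x < n).
Proof.
case: (ltnP x n) => [ltxn|lenx]; first by rewrite (perm_natE_lt w ltxn) ltn_ord.
by rewrite perm_nat_out // ltnNge lenx.
Qed.

Lemma perm_natM u w x : perm_nat (w * u)%g x = perm_nat u (perm_nat w x).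
Proof.
case: (ltnP x n) => [ltxn|lenx]; last by rewrite !perm_nat_out.
by rewrite (perm_natE_lt _ ltxn) permM (perm_natE_lt w ltxn) perm_natE.
Qed.

Lemma perm_nat1 x : perm_nat 1%g x = x.
Proof.
case: (ltnP x n) => [ltxn|lenx]; last by rewrite perm_nat_out.
by rewrite (perm_natE_lt _ ltxn) perm1.
Qed.

Lemma perm_natK w : cancel (perm_nat w) (perm_nat w^-1%g).
Proof. by move=> x; rewrite -perm_natM mulgV perm_nat1. Qed.

Lemma perm_natKV w : cancel (perm_nat w^-1%g) (perm_nat w).
Proof. by move=> x; rewrite -perm_natM mulVg perm_nat1. Qed.

Lemma perm_nat_inj w : injective (perm_nat w).
Proof. exact: can_inj (perm_natK w). Qed.

Lemma sum_perm_nat w (F : nat -> nat) :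
  \sum_(0 <= q < n) F (perm_nat w q) = \sum_(0 <= x < n) F x.
Proof.
rewrite !big_mkord (reindex_inj (h := fun i => w^-1%g i)) /=; last exact: perm_inj.
by apply: eq_bigr => i _; rewrite perm_natE permKV.
Qed.

Lemma sum_perm_nat_ltn w p : p < n ->
  \sum_(0 <= q < n) (perm_nat w q < perm_nat w p) = perm_nat w p.
Proof.
move=> ltpn; rewrite (sum_perm_nat w (fun x => x < perm_nat w p)).
by rewrite sum_nat_ltn // ltnW // perm_nat_ltn.
Qed.

End PermNat.

Section LexRank.
Variable n : nat.
Variables key tie : nat -> nat.
Hypothesis tie_inj : {in gtn n &, injective tie}.

Definition lex_lt p' p :=
  (key p' < key p) || ((key p' == key p) && (tie p' < tie p)).

Definition lex_rank p := \sum_(0 <= q < n) lex_lt q p.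

Lemma lex_ltxx p : lex_lt p p = false.
Proof. by rewrite /lex_lt !ltnn andbF. Qed.

Lemma lex_lt_trans p1 p2 p3 : lex_lt p1 p2 -> lex_lt p2 p3 -> lex_lt p1 p3.
Proof. by rewrite /lex_lt; lia. Qed.

Lemma lex_lt_total p p' : p < n -> p' < n -> p != p' -> lex_lt p p' || lex_lt p' p.
Proof.
move=> ltpn ltp'n neq_pp'; rewrite /lex_lt.
case: (ltngtP (key p) (key p')) => //= _.
case: (ltngtP (tie p) (tie p')) => // eq_tie.
by rewrite (tie_inj ltpn ltp'n eq_tie) eqxx in neq_pp'.
Qed.

Lemma lex_rank_ltn p : p < n -> lex_rank p < n.
Proof.
move=> ltpn; apply: (@leq_trans (\sum_(0 <= q < n) 1)).
  by apply: (ltn_sum_nat ltpn) => [i _|]; rewrite ?lex_ltxx ?leq_b1.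
by rewrite sum_nat_const_nat subn0 muln1.
Qed.

Lemma lex_rank_homo p p' : p' < n -> lex_lt p' p -> lex_rank p' < lex_rank p.
Proof.
move=> ltp'n lt_p'p; apply: (ltn_sum_nat ltp'n) => [i _|]; last by rewrite lex_ltxx lt_p'p.
by case lt_ip': (lex_lt i p') => //=; rewrite (lex_lt_trans lt_ip' lt_p'p).
Qed.

Lemma ltn_lex_rank p p' : p < n -> p' < n -> (lex_rank p' < lex_rank p) = lex_lt p' p.
Proof.
move=> ltpn ltp'n; apply/idP/idP; last exact: lex_rank_homo.
move=> lt_rank; have [eq_pp'|neq_pp'] := eqVneq p' p; first by rewrite eq_pp' ltnn in lt_rank.
case/orP: (lex_lt_total ltp'n ltpn neq_pp') => // /(lex_rank_homo ltpn).
by rewrite ltnNge ltnW.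
Qed.

Lemma lex_rank_inj : {in gtn n &, injective lex_rank}.
Proof.
move=> p p' ltpn ltp'n eq_rank; apply/eqP; apply: contraT => neq_pp'.
case/orP: (lex_lt_total ltpn ltp'n neq_pp').
  by move=> /(lex_rank_homo ltpn); rewrite eq_rank ltnn.
by move=> /(lex_rank_homo ltp'n); rewrite eq_rank ltnn.
Qed.

Definition lex_rank_ord (i : 'I_n) : 'I_n := Ordinal (lex_rank_ltn (ltn_ord i)).

Lemma lex_rank_ord_inj : injective lex_rank_ord.
Proof.
move=> i j /(congr1 val) /= /lex_rank_inj eq_ij.
by apply/val_inj/eq_ij; rewrite inE.
Qed.

Definition lex_rank_perm : 'S_n := perm lex_rank_ord_inj.

Lemma perm_nat_lex_rank p : p < n -> perm_nat lex_rank_perm p = lex_rank p.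
Proof. by move=> ltpn; rewrite (perm_natE_lt _ ltpn) permE. Qed.

(* [g] lists the values of [key] in increasing order, and [lex_rank] sorts the
   positions by [key]. *)
Lemma lex_rank_relabel (g : nat -> nat) :
  {homo g : x y / x <= y} ->
  (forall j, \sum_(0 <= q < n) (key q == j) = \sum_(0 <= x < n) (g x == j)) ->
  forall p, p < n -> g (lex_rank p) = key p.
Proof.
move=> g_homo same_fibers p ltpn; set K := key p.
have rankE : lex_rank p = \sum_(0 <= q < n) (key q < K)
                          + \sum_(0 <= q < n) ((key q == K) && (tie q < tie p)).
  rewrite /lex_rank -big_split /=; apply: eq_big_nat => q _; rewrite /lex_lt -/K.
  by case: (ltngtP (key q) K).
have lt_fiber : \sum_(0 <= q < n) ((key q == K) && (tie q < tie p))
                < \sum_(0 <= q < n) (key q == K).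
  apply: (ltn_sum_nat ltpn) => [i _|]; last by rewrite eqxx ltnn.
  by case: (key i == K); rewrite ?leq_b1.
have sum_ltnS : \sum_(0 <= x < n) (g x < K.+1)
                = \sum_(0 <= x < n) (g x < K) + \sum_(0 <= x < n) (g x == K).
  rewrite -big_split /=; apply: eq_big_nat => x _.
  by rewrite ltnS; case: (ltngtP (g x) K).
have ltrn := lex_rank_ltn ltpn.
have upper : lex_rank p < \sum_(0 <= x < n) (g x < K.+1).
  by rewrite sum_ltnS rankE (sum_nat_ltn_fibers K same_fibers) -same_fibers ltn_add2l.
have lower : \sum_(0 <= x < n) (g x < K) <= lex_rank p.
  by rewrite rankE (sum_nat_ltn_fibers K same_fibers) leq_addr.
rewrite (ltn_sum_nat_homo _ g_homo ltrn) ltnS in upper.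
rewrite leqNgt (ltn_sum_nat_homo _ g_homo ltrn) -leqNgt in lower.
by apply/eqP; rewrite eqn_leq upper lower.
Qed.

End LexRank.

Section Descents.
Variable n : nat.
Implicit Types (P : pred nat) (w : 'S_n).

(* Descent positions are 1-based: a descent at [i] compares the 0-based
   positions [i.-1] and [i]. *)
Definition des_sub P w : bool :=
  [forall i : 'I_n, (0 < i) && (perm_nat w i < perm_nat w i.-1) ==> P i].

Lemma des_subP P w :
  reflect (forall i, 0 < i -> i < n -> ~~ P i -> perm_nat w i.-1 < perm_nat w i)
          (des_sub P w).
Proof.
apply: (iffP forallP) => [des_w i i_gt0 ltin Pi | des_w i].
  have := des_w (Ordinal ltin); rewrite /= i_gt0 (negbTE Pi) implybF /= -leqNgt.
  by rewrite leq_eqVlt => /orP[/eqP/perm_nat_inj|] //; lia.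
apply/implyP => /andP[i_gt0 lt_w]; apply: contraTT lt_w => Pi.
by rewrite -leqNgt ltnW ?des_w.
Qed.

Lemma eq_des_sub P Q w : {in [pred i | 0 < i < n], P =1 Q} -> des_sub P w = des_sub Q w.
Proof.
move=> eqPQ; apply: eq_forallb => i; case: (posnP i) => [//|i_gt0] /=.
by rewrite eqPQ // inE i_gt0 /=.
Qed.

Lemma desbE w (i : 'I_n) : desb w i = (0 < i) && (perm_nat w i < perm_nat w i.-1).
Proof.
apply/existsP/idP => [[j /existsP[j' /and4P[/eqP <- /eqP <- -> lt_w]]]|].
  by rewrite !perm_natE.
move=> /andP[i_gt0 lt_w]; have lt_pred : i.-1 < n by apply: leq_ltn_trans (leq_pred _) _.
exists (Ordinal lt_pred); apply/existsP; exists i.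
by rewrite /= !eqxx i_gt0 -perm_natE -(perm_natE_lt w lt_pred).
Qed.

End Descents.

Section Factorizations.
Variable n : nat.
Variables sa sb : seq nat.
Implicit Types u v w : 'S_n.

(* With [u := w^-1 * v], the paper's product [u w] is [v]: [factorizes v w]
   says that [w] contributes to the coefficient of [v] in [B_sa B_sb]. *)
Definition factorizes v w := des_sub (mem sb) w && des_sub (mem sa) (w^-1 * v)%g.

Definition alabel w x := blk sa (perm_nat w x).

Definition label_cuts (lab : nat -> nat) : pred nat :=
  fun i => (i \in sb) || (lab i.-1 != lab i).

Lemma ltn_perm_nat_blk u x y : des_sub (mem sa) u -> x < y -> y < n ->
  blk sa x = blk sa y -> perm_nat u x < perm_nat u y.
Proof.
move=> /des_subP des_u; elim: y => [//|y IH] ltxy ltyn eq_blk.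
have le_blk : blk sa y <= blk sa y.+1 := leq_blk sa (leqnSn y).
have blk_y : blk sa y = blk sa y.+1.
  by apply/eqP; rewrite eqn_leq le_blk -eq_blk leq_blk.
have step : perm_nat u y < perm_nat u y.+1.
  by apply: des_u; rewrite // -(blk_pred_eq sa (ltn0Sn y)) blk_y.
move: ltxy; rewrite ltnS leq_eqVlt => /orP[/eqP-> //|ltxy].
by apply: ltn_trans step; apply: IH; rewrite ?(ltnW ltyn) // blk_y.
Qed.

Lemma factorizes_lex v w p p' : factorizes v w -> p < n -> p' < n ->
  (perm_nat w p' < perm_nat w p) = lex_lt (alabel w) (perm_nat v) p' p.
Proof.
move=> /andP[_ des_u] ltpn ltp'n; rewrite /lex_lt /alabel.
have vE q : perm_nat v q = perm_nat (w^-1 * v)%g (perm_nat w q).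
  by rewrite perm_natM perm_natK.
rewrite !vE; set x' := perm_nat w p'; set x := perm_nat w p.
have ltxn : x < n by rewrite perm_nat_ltn.
have ltx'n : x' < n by rewrite perm_nat_ltn.
case: (ltngtP (blk sa x') (blk sa x)) => [lt_blk|lt_blk|eq_blk] /=.
- by apply: contraLR lt_blk; rewrite -!leqNgt; apply: leq_blk.
- apply/negbTE; rewrite -leqNgt ltnW //.
  by apply: contraLR lt_blk; rewrite -!leqNgt; apply: leq_blk.
case: (ltngtP x' x) => [lt_x|lt_x|->]; last by rewrite ltnn.
  by rewrite (ltn_perm_nat_blk des_u lt_x ltxn eq_blk).
by apply/esym/negbTE; rewrite -leqNgt ltnW // (ltn_perm_nat_blk des_u lt_x ltx'n).
Qed.

Lemma factorizes_lex_rank v w p : factorizes v w -> p < n ->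
  perm_nat w p = lex_rank n (alabel w) (perm_nat v) p.
Proof.
move=> fact_vw ltpn; rewrite -(sum_perm_nat_ltn w ltpn).
by apply: eq_big_nat => q /andP[_ ltqn]; rewrite (factorizes_lex fact_vw ltpn ltqn).
Qed.

Lemma factorizes_uniq v w w' : factorizes v w -> factorizes v w' ->
  (forall p, p < n -> alabel w p = alabel w' p) -> w = w'.
Proof.
move=> fact_vw fact_vw' eq_lab; apply/permP => i; apply: val_inj.
rewrite /= -!perm_natE (factorizes_lex_rank fact_vw) // (factorizes_lex_rank fact_vw') //.
by apply: eq_big_nat => q /andP[_ ltqn]; rewrite /lex_lt !eq_lab.
Qed.

Lemma factorizes_des_sub v w : factorizes v w -> des_sub (label_cuts (alabel w)) v.
Proof.
move=> fact_vw; apply/des_subP => i i_gt0 ltin.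
rewrite negb_or negbK => /andP[i_sb /eqP eq_lab].
have lt_pred : i.-1 < n by apply: leq_ltn_trans (leq_pred _) ltin.
have /andP[/des_subP des_w _] := fact_vw.
have := des_w i i_gt0 ltin i_sb.
by rewrite (factorizes_lex fact_vw) // /lex_lt eq_lab ltnn eqxx.
Qed.

Section Relabel.
Variables v w0 : 'S_n.

Let v_inj : {in gtn n &, injective (perm_nat v)} := in2W (@perm_nat_inj n v).

(* Sort the positions by their label under [w0], breaking ties by the values
   of [v]: by [factorizes_uniq] this is the only possible [w]. *)

Definition relabel_perm := lex_rank_perm (alabel w0) v_inj.

Lemma alabel_relabel_perm p : p < n -> alabel relabel_perm p = alabel w0 p.
Proof.
move=> ltpn; rewrite /alabel perm_nat_lex_rank //.
apply: (lex_rank_relabel _ (leq_blk sa)) => // j.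
exact: (sum_perm_nat w0 (fun x => blk sa x == j)).
Qed.

Lemma des_relabel_perm : des_sub (mem sb) w0 -> des_sub (label_cuts (alabel w0)) v ->
  des_sub (mem sb) relabel_perm.
Proof.
move=> des_w0 des_v; apply/des_subP => i i_gt0 ltin i_sb.
have lt_pred : i.-1 < n by apply: leq_ltn_trans (leq_pred _) ltin.
rewrite !perm_nat_lex_rank // (ltn_lex_rank _ v_inj) // /lex_lt.
have /ltnW/(leq_blk sa) := des_subP _ _ des_w0 i i_gt0 ltin i_sb.
rewrite leq_eqVlt => /orP[/eqP eq_lab|->] //; rewrite /alabel eq_lab ltnn eqxx /=.
apply: (des_subP _ _ des_v i i_gt0 ltin).
by rewrite /label_cuts negb_or i_sb /alabel eq_lab eqxx.
Qed.

Lemma des_relabel_perm_inv : des_sub (mem sa) (relabel_perm^-1 * v)%g.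
Proof.
apply/des_subP => x x_gt0 ltxn x_sa; rewrite !perm_natM.
set p := perm_nat relabel_perm^-1%g x.-1; set p' := perm_nat relabel_perm^-1%g x.
have ltpn : p < n by rewrite perm_nat_ltn; apply: leq_ltn_trans (leq_pred _) ltxn.
have ltp'n : p' < n by rewrite perm_nat_ltn.
have : perm_nat relabel_perm p < perm_nat relabel_perm p' by rewrite !perm_natKV; lia.
rewrite !perm_nat_lex_rank // (ltn_lex_rank _ v_inj) // /lex_lt -!alabel_relabel_perm //.
have eq_blk : blk sa x.-1 = blk sa x by apply/eqP; rewrite blk_pred_eq.
by rewrite /alabel !perm_natKV eq_blk ltnn eqxx.
Qed.

End Relabel.
End Factorizations.

Section Labelings.
Variable n : nat.
Variables sa sb : seq nat.
Implicit Types v w : 'S_n.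

Definition labeling := {ffun 'I_n -> 'I_(size sa).+1}.

Definition blk_ord x : 'I_(size sa).+1 := Ordinal (blk_size sa x : blk sa x < (size sa).+1).

Definition alabeling w : labeling := [ffun p : 'I_n => blk_ord (perm_nat w p)].

Definition lab_nat (l : labeling) x := if insub x is Some i then val (l i) else 0.

Definition realizable := [set l | [exists w, des_sub (mem sb) w && (alabeling w == l)]].

Definition block_const (l : labeling) :=
  [forall i : 'I_n, (0 < i) && (val i \notin sb) ==> (lab_nat l i.-1 == lab_nat l i)].

Definition lab_cuts l := label_cuts sb (lab_nat l).

Lemma lab_nat_ord (l : labeling) (p : 'I_n) : lab_nat l p = l p.
Proof. by rewrite /lab_nat valK. Qed.

Lemma lab_natE (l : labeling) x (ltxn : x < n) : lab_nat l x = l (Ordinal ltxn).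
Proof. by rewrite -lab_nat_ord. Qed.

Lemma lab_nat_alabeling w x : x < n -> lab_nat (alabeling w) x = alabel sa w x.
Proof. by move=> ltxn; rewrite (lab_natE _ ltxn) ffunE. Qed.

Lemma alabeling_eqP w w' :
  reflect (forall p, p < n -> alabel sa w p = alabel sa w' p) (alabeling w == alabeling w').
Proof.
apply: (iffP eqP) => [eq_lab p ltpn | eq_lab].
  by rewrite -!lab_nat_alabeling // eq_lab.
by apply/ffunP => p; rewrite !ffunE; apply: val_inj; apply: eq_lab.
Qed.

Lemma des_sub_lab_cuts w v :
  des_sub (lab_cuts (alabeling w)) v = des_sub (label_cuts sb (alabel sa w)) v.
Proof.
apply: eq_des_sub => i /andP[i_gt0 ltin].
by rewrite /lab_cuts /label_cuts !lab_nat_alabeling // (leq_ltn_trans (leq_pred _)).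
Qed.

Lemma lab_cuts_block_const l v : block_const l -> des_sub (lab_cuts l) v = des_sub (mem sb) v.
Proof.
move=> /forallP l_const; apply: eq_des_sub => i /andP[i_gt0 ltin].
rewrite /lab_cuts /label_cuts; case: (boolP (i \in sb)) => //= i_sb.
have := l_const (Ordinal ltin); rewrite /= i_gt0 i_sb => /eqP ->.
by rewrite eqxx (negbTE i_sb).
Qed.

Lemma sum_factorizes_label v l :
  \sum_w (factorizes sa sb v w && (alabeling w == l))
  = (l \in realizable) && des_sub (lab_cuts l) v.
Proof.
case: (boolP (l \in realizable)) => [|l_real] /=; last first.
  apply: big1 => w _; apply/eqP; rewrite eqb0; apply: contra l_real.
  by move=> /andP[/andP[des_w _] lab_w]; rewrite inE; apply/existsP; exists w; rewrite des_w.
rewrite inE => /existsP[w0 /andP[des_w0 /eqP <-{l}]].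
rewrite des_sub_lab_cuts; case: (boolP (des_sub _ v)) => [des_v|des_v].
  set w := relabel_perm sa v w0.
  have fact_vw : factorizes sa sb v w.
    by rewrite /factorizes des_relabel_perm_inv (des_relabel_perm des_w0 des_v).
  have lab_w : alabeling w == alabeling w0 by apply/alabeling_eqP/alabel_relabel_perm.
  rewrite (bigD1 w) //= fact_vw lab_w big1 // => w' neq_w'.
  apply/eqP; rewrite eqb0; apply: contra neq_w' => /andP[fact_vw' /alabeling_eqP eq_lab].
  apply/eqP; apply: (factorizes_uniq fact_vw' fact_vw) => p ltpn.
  by rewrite eq_lab // alabel_relabel_perm.
apply: big1 => w _; apply/eqP; rewrite eqb0; apply: contra des_v.
move=> /andP[/factorizes_des_sub des_v /eqP lab_w].
by rewrite -des_sub_lab_cuts -lab_w des_sub_lab_cuts.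
Qed.

Lemma sum_factorizes v :
  \sum_w factorizes sa sb v w = \sum_(l in realizable) des_sub (lab_cuts l) v.
Proof.
transitivity (\sum_w \sum_(l : labeling) (factorizes sa sb v w && (alabeling w == l))).
  apply: eq_bigr => w _; rewrite (bigD1 (alabeling w)) //= eqxx andbT big1 ?addn0 //.
  by move=> l neq_l; rewrite eq_sym (negbTE neq_l) andbF.
rewrite exchange_big /= [RHS]big_mkcond /=.
by apply: eq_bigr => l _; rewrite sum_factorizes_label; case: (_ \in _).
Qed.

End Labelings.

Section BlockConstantLabelings.
Variable n : nat.
Variables a b : seq nat.
Hypothesis comp_a : is_comp n a.
Hypothesis comp_b : is_comp n b.
Local Notation sa := (compSet a).
Local Notation sb := (compSet b).
Implicit Types f : {ffun 'I_(size b) -> 'I_(size a)}.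

Definition eta_set := [set f : {ffun 'I_(size b) -> 'I_(size a)} |
  [forall j : 'I_(size a), nth 0 a j == \sum_(i : 'I_(size b) | f i == j) nth 0 b i]].

Definition fun_nat f (i : nat) : nat := if insub i is Some o then val (f o) else 0.

Definition fun_labeling f : labeling n sa := [ffun p : 'I_n => inord (fun_nat f (blk sb p))].

Lemma fun_natE f (o : 'I_(size b)) : fun_nat f o = f o.
Proof. by rewrite /fun_nat valK. Qed.

Lemma fun_nat_leq f i : fun_nat f i <= size sa.
Proof.
rewrite size_compSet /fun_nat; case: insub => // o.
by case: (f o) => x /=; case: (size a).
Qed.

Lemma blk_sb_ltn p : p < n -> blk sb p < size b.
Proof.
move=> ltpn; have b_gt0 := comp_size_gt0 comp_b (leq_ltn_trans (leq0n p) ltpn).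
by apply: leq_ltn_trans (blk_size _ _) _; rewrite size_compSet ltn_predL.
Qed.

Lemma lab_nat_fun_labeling f p : p < n -> lab_nat (fun_labeling f) p = fun_nat f (blk sb p).
Proof. by move=> ltpn; rewrite (lab_natE _ ltpn) ffunE inordK // ltnS fun_nat_leq. Qed.

Lemma sum_fun_nat_fiber f j : \sum_(0 <= p < n) (fun_nat f (blk sb p) == j) =
  \sum_(i : 'I_(size b) | val (f i) == j) nth 0 b i.
Proof.
transitivity (\sum_(0 <= p < n) \sum_(i : 'I_(size b)) (blk sb p == i) * (val (f i) == j)).
  apply: eq_big_nat => p /andP[_ ltpn]; set o := Ordinal (blk_sb_ltn ltpn).
  rewrite (bigD1 o) //= eqxx mul1n -(fun_natE f o) big1 ?addn0 // => i neq_io.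
  suff -> : (blk sb p == i) = false by [].
  by apply: contraNF neq_io => /eqP eq_i; apply/eqP/val_inj.
rewrite exchange_big [RHS]big_mkcond /=; apply: eq_bigr => i _.
rewrite -big_distrl /= (card_blk_fiber _ comp_b).
by case: (_ == j); rewrite ?muln1 ?muln0.
Qed.

Lemma eta_set_fiber f : f \in eta_set -> forall j,
  \sum_(0 <= p < n) (fun_nat f (blk sb p) == j) = nth 0 a j.
Proof.
rewrite inE => /forallP eta_f j; rewrite sum_fun_nat_fiber.
case: (ltnP j (size a)) => [ltja|leaj]; first by rewrite (eqP (eta_f (Ordinal ltja))).
rewrite nth_default // big_pred0 // => i; apply/negbTE.
by rewrite neq_ltn (leq_trans (ltn_ord _) leaj).
Qed.

Lemma block_const_fun_labeling f : block_const sb (fun_labeling f).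
Proof.
apply/forallP => i; apply/implyP => /andP[i_gt0 i_sb].
have lt_pred : i.-1 < n by apply: leq_ltn_trans (leq_pred _) (ltn_ord i).
have eq_blk : blk sb i.-1 = blk sb i by apply/eqP; rewrite blk_pred_eq.
by rewrite !lab_nat_fun_labeling // eq_blk.
Qed.

Lemma fun_labeling_realizable f : f \in eta_set -> fun_labeling f \in realizable n sa sb.
Proof.
move=> eta_f; set key := fun p => fun_nat f (blk sb p).
have id_inj : {in gtn n &, injective id} by [].
set w0 := lex_rank_perm key id_inj.
have lab_w0 p : p < n -> blk sa (perm_nat w0 p) = key p.
  move=> ltpn; rewrite perm_nat_lex_rank //; apply: (lex_rank_relabel _ (leq_blk sa)) => // j.
  by rewrite (card_blk_fiber _ comp_a) (eta_set_fiber eta_f).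
rewrite inE; apply/existsP; exists w0; apply/andP; split.
  apply/des_subP => i i_gt0 ltin i_sb.
  have lt_pred : i.-1 < n by apply: leq_ltn_trans (leq_pred _) ltin.
  have eq_blk : blk sb i.-1 = blk sb i by apply/eqP; rewrite blk_pred_eq.
  rewrite !perm_nat_lex_rank // (ltn_lex_rank _ id_inj) // /lex_lt /key eq_blk ltnn eqxx /=.
  by rewrite ltn_predL.
apply/eqP/ffunP => p; rewrite !ffunE; apply: val_inj.
by rewrite /= lab_w0 // inordK // ltnS fun_nat_leq.
Qed.

Lemma fun_labeling_inj : injective fun_labeling.
Proof.
move=> f g eq_fg; apply/ffunP => o.
have : 0 < \sum_(0 <= x < n) (blk sb x == o).
  by rewrite (card_blk_fiber _ comp_b) (comp_nth_gt0 comp_b).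
case/sum_nat_gt0_exists => p ltpn /eqP blk_p; apply: val_inj.
have := lab_nat_fun_labeling f ltpn; rewrite eq_fg lab_nat_fun_labeling //.
by rewrite blk_p !fun_natE.
Qed.

Lemma block_const_lab_nat (l : labeling n sa) p q : block_const sb l -> p < n -> q < n ->
  blk sb p = blk sb q -> lab_nat l p = lab_nat l q.
Proof.
move=> /forallP l_const; wlog lepq : p q / p <= q.
  move=> wlog_pq ltpn ltqn eq_blk; case: (leqP p q) => [lepq|/ltnW leqp].
    exact: wlog_pq.
  exact/esym/wlog_pq.
move=> ltpn ltqn; rewrite -(subnKC lepq) in ltqn *; elim: (q - p) ltqn => [|d IH] ltqn eq_blk.
  by rewrite addn0.
have ltdn : p + d < n by apply: leq_ltn_trans ltqn; rewrite addnS.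
have eq_blk_d : blk sb p = blk sb (p + d).
  apply/eqP; rewrite eqn_leq leq_blk ?leq_addr //= eq_blk.
  by apply: leq_blk; rewrite addnS.
have i_sb : (p + d).+1 \notin sb.
  by rewrite -(blk_pred_eq _ (ltn0Sn _)) /= -eq_blk_d -addnS eq_blk.
have := l_const (Ordinal ltqn); rewrite /= addnS /= i_sb => /eqP <-.
exact: IH.
Qed.

Lemma size_a_gt0 (o : 'I_(size b)) : 0 < size a.
Proof.
apply: (comp_size_gt0 comp_a); move: comp_b => /andP[/allP b_pos /eqP <-].
by apply: sumn_gt0; [apply/allP | apply: leq_ltn_trans (ltn_ord o)].
Qed.

Definition block_label (l : labeling n sa) (o : 'I_(size b)) : nat :=
  oapp (fun p : 'I_n => lab_nat l p) 0 [pick p : 'I_n | blk sb p == o].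

Lemma block_label_ltn l o : block_label l o < size a.
Proof.
rewrite /block_label; case: pickP => [p _|_] /=; last exact: size_a_gt0.
by rewrite lab_nat_ord -(prednK (size_a_gt0 o)) -size_compSet ltn_ord.
Qed.

Definition labeling_fun l : {ffun 'I_(size b) -> 'I_(size a)} :=
  [ffun o => Ordinal (block_label_ltn l o)].

Lemma fun_labeling_labeling_fun l : block_const sb l -> fun_labeling (labeling_fun l) = l.
Proof.
move=> l_const; apply/ffunP => p; apply: val_inj; rewrite /= -!lab_nat_ord.
rewrite lab_nat_fun_labeling //.
rewrite -[blk sb p]/(val (Ordinal (blk_sb_ltn (ltn_ord p)))) fun_natE ffunE /= /block_label.
case: pickP => [q /eqP eq_blk | no_pos] /=; last by have := no_pos p; rewrite eqxx.
exact: block_const_lab_nat.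
Qed.

Lemma labeling_fun_eta l :
  l \in realizable n sa sb -> block_const sb l -> labeling_fun l \in eta_set.
Proof.
rewrite inE => /existsP[w0 /andP[_ /eqP lab_w0]] l_const.
rewrite inE; apply/forallP => j; apply/eqP.
rewrite -(card_blk_fiber _ comp_a) -(sum_perm_nat w0 (fun x => blk sa x == j)).
transitivity (\sum_(0 <= q < n) (fun_nat (labeling_fun l) (blk sb q) == j)).
  apply: eq_big_nat => q /andP[_ ltqn].
  by rewrite -lab_nat_fun_labeling // fun_labeling_labeling_fun // -lab_w0 lab_nat_alabeling.
by rewrite sum_fun_nat_fiber.
Qed.

Lemma card_block_const_realizable :
  #|[set l in realizable n sa sb | block_const sb l]| = eta a b.
Proof.
rewrite -[eta a b]/#|eta_set| -(card_imset _ fun_labeling_inj).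
apply: eq_card => l; rewrite inE.
apply/andP/imsetP => [[l_real l_const] | [f eta_f ->]].
  by exists (labeling_fun l); rewrite ?labeling_fun_eta ?fun_labeling_labeling_fun.
by rewrite fun_labeling_realizable ?block_const_fun_labeling.
Qed.

End BlockConstantLabelings.

Import GRing.Theory.
Local Open Scope ring_scope.

Section GroupAlgebra.
Variable k : comPzRingType.
Variable n : nat.
Implicit Types f g h : alg k n.

Lemma gaMulE f g x : gaMul f g x = \sum_(w : 'S_n) f (w^-1 * x)%g * g w.
Proof.
rewrite ffunE exchange_big /=; apply: eq_bigr => w _.
rewrite (bigD1 (w^-1 * x)%g) //= /pmul mulgA mulgV mul1g eqxx big1 ?addr0 // => u neq_u.
by case: eqP => // eq_x; case/eqP: neq_u; rewrite -eq_x /pmul mulgA mulVg mul1g.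
Qed.

Lemma gaMulA f g h : gaMul f (gaMul g h) = gaMul (gaMul f g) h.
Proof.
apply/ffunP => x; rewrite !gaMulE.
under eq_bigr => w _ do rewrite gaMulE big_distrr.
rewrite exchange_big /=; apply: eq_bigr => w' _.
rewrite gaMulE big_distrl /= (reindex_inj (mulgI w')) /=.
by apply: eq_bigr => w _; rewrite mulgA mulVg mul1g invMg !mulgA mulrA.
Qed.

Lemma gaMulBl f g h : gaMul (gaSub f g) h = gaSub (gaMul f h) (gaMul g h).
Proof.
apply/ffunP => x; rewrite [RHS]ffunE !gaMulE -sumrB.
by apply: eq_bigr => w _; rewrite ffunE mulrBl.
Qed.

Lemma gaMulZl c f h : gaMul (gaScale c f) h = gaScale c (gaMul f h).
Proof.
apply/ffunP => x; rewrite [RHS]ffunE !gaMulE big_distrr.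
by apply: eq_bigr => w _; rewrite ffunE -mulrA.
Qed.

Lemma gaMulDl f g h : gaMul (gaAdd f g) h = gaAdd (gaMul f h) (gaMul g h).
Proof.
apply/ffunP => x; rewrite [RHS]ffunE !gaMulE -big_split.
by apply: eq_bigr => w _; rewrite ffunE mulrDl.
Qed.

Lemma gaMul0l h : gaMul (gaZero k n) h = gaZero k n.
Proof. by apply/ffunP => x; rewrite gaMulE ffunE big1 // => w _; rewrite ffunE mul0r. Qed.

Lemma gaAddA f g h : gaAdd f (gaAdd g h) = gaAdd (gaAdd f g) h.
Proof. by apply/ffunP => x; rewrite !ffunE addrA. Qed.

Lemma gaAdd0l f : gaAdd (gaZero k n) f = f.
Proof. by apply/ffunP => x; rewrite !ffunE add0r. Qed.

Lemma gaAdd0r f : gaAdd f (gaZero k n) = f.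
Proof. by apply/ffunP => x; rewrite !ffunE addr0. Qed.

Lemma gaMul_suml I (r : seq I) (P : pred I) (F : I -> alg k n) h :
  gaMul (\big[@gaAdd k n/gaZero k n]_(i <- r | P i) F i) h
  = \big[@gaAdd k n/gaZero k n]_(i <- r | P i) gaMul (F i) h.
Proof. by apply: (big_morph (fun f => gaMul f h)) => [f g|]; rewrite ?gaMulDl ?gaMul0l. Qed.

Lemma big_gaAddE I (r : seq I) (P : pred I) (F : I -> alg k n) w :
  (\big[@gaAdd k n/gaZero k n]_(i <- r | P i) F i) w = \sum_(i <- r | P i) F i w.
Proof. by apply: (big_morph (fun f : alg k n => f w)) => [f g|]; rewrite ffunE. Qed.

End GroupAlgebra.

Section DescentAlgebra.
Variable k : comPzRingType.
Variable n : nat.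
Implicit Types (a b : seq nat) (x : alg k n).

Definition Bdes (P : pred nat) : alg k n := [ffun w => (des_sub P w)%:R].

Lemma BcompE c : Bcomp k n c = Bdes (mem (compSet c)).
Proof.
apply/ffunP => w; rewrite !ffunE.
rewrite (_ : [forall j : 'I_n, _] = des_sub (mem (compSet c)) w); first by case: des_sub.
by apply: eq_forallb => i; rewrite desbE.
Qed.

Lemma Bcomp_mulE a b v :
  gaMul (Bcomp k n a) (Bcomp k n b) v
  = (\sum_(w : 'S_n) factorizes (compSet a) (compSet b) v w)%:R.
Proof.
rewrite gaMulE natr_sum; apply: eq_bigr => w _.
by rewrite !BcompE !ffunE -natrM mulnb andbC.
Qed.

Lemma Bcomp_mul_sub_eta a b : is_comp n a -> is_comp n b ->
  gaSub (gaMul (Bcomp k n a) (Bcomp k n b)) (gaScale (eta a b)%:R (Bcomp k n b))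
  = \big[@gaAdd k n/gaZero k n]_(l in [set l in realizable n (compSet a) (compSet b)
                                        | ~~ block_const (compSet b) l])
      Bdes (lab_cuts (compSet b) l).
Proof.
move=> comp_a comp_b; apply/ffunP => v.
rewrite big_gaAddE ffunE Bcomp_mulE ffunE sum_factorizes (bigID (block_const (compSet b))) /=.
rewrite -(card_block_const_realizable comp_a comp_b) -sum1_card BcompE ffunE.
rewrite natrD !natr_sum mulr_suml; set R := realizable _ _ _; set sb := compSet b.
have -> : \sum_(l in [set l in R | block_const sb l]) 1 * (des_sub (mem sb) v)%:R
        = \sum_(l in R | block_const sb l) (des_sub (lab_cuts sb l) v)%:R :> k.
  apply: eq_big => l; rewrite inE // => /andP[_ l_const].
  by rewrite mul1r lab_cuts_block_const.
by rewrite addrC addKr; apply: eq_big => [l|l _]; rewrite ?inE ?ffunE.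
Qed.

Lemma inQ0 b : inQ b (gaZero k n).
Proof. by exists [::]. Qed.

Lemma inQD b x y : inQ b x -> inQ b y -> inQ b (gaAdd x y).
Proof.
move=> [s [s_ref ->]] [t [t_ref ->]]; exists (s ++ t); split.
  by move=> p; rewrite mem_cat => /orP[/s_ref|/t_ref].
by elim: s {s_ref} => [|p s IH] /=; rewrite ?gaAdd0l // -IH gaAddA.
Qed.

Lemma inQ_mulBdes b (P : pred nat) i x : is_comp n b ->
  (forall y, y \in compSet b -> P y) -> (0 < i < n)%N -> P i -> i \notin compSet b ->
  inQ b (gaMul (Bdes P) x).
Proof.
move=> comp_b sub_bP /andP[i_gt0 ltin] Pi i_b.
have [c comp_c cutsP] := comp_with_cuts P (leq_ltn_trans (leq0n i) ltin).
have ref_cb : srefines c b.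
  split; last by move=> eq_cb; move: i_b; rewrite -eq_cb cutsP ?Pi.
  apply: (refines_of_compSet comp_c comp_b) => y y_b.
  have := compSet_bounds (proj1 (andP comp_b)) y_b.
  by rewrite (eqP (proj2 (andP comp_b))) => /andP[y_gt0 ltyn]; rewrite cutsP //; apply: sub_bP.
exists [:: (c, x)]; split; first by move=> p; rewrite inE => /eqP ->.
rewrite /= gaAdd0r BcompE; congr gaMul; apply/ffunP => w; rewrite !ffunE.
by rewrite (eq_des_sub (Q := P)) // => j /andP[j_gt0 ltjn]; apply: cutsP.
Qed.

End DescentAlgebra.

Theorem theorem2p8 (k : comPzRingType) (n : nat) (a b : seq nat) :
  is_comp n a -> is_comp n b ->
  forall x : alg k n,
    inQ b (gaSub (gaMul (Bcomp k n a) (gaMul (Bcomp k n b) x))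
                (gaScale (eta a b)%:R (gaMul (Bcomp k n b) x))).
Proof.
move=> comp_a comp_b x.
rewrite gaMulA -gaMulZl -gaMulBl Bcomp_mul_sub_eta // gaMul_suml.
apply: big_ind => [|y z|l]; [exact: inQ0 | exact: inQD |].
rewrite inE => /andP[_ /forallPn[i]]; rewrite negb_imply => /andP[/andP[i_gt0 i_b] neq_lab].
apply: (inQ_mulBdes (i := i)) => //; last by rewrite /lab_cuts /label_cuts neq_lab orbT.
- by move=> y y_b; rewrite /lab_cuts /label_cuts y_b.
- by rewrite i_gt0 ltn_ord.
Qed.
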